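(* Let $G$ be a bipartite edge-magic simple graph with stable sets $X$ and $Y$, suppose $G\cong H_1\oplus H_2$ is a decomposition of $G$, and let $n\ge1$. Then $|\tau_{S_{2n}(G;H_1,H_2)}|\ge (n+1)|\tau_G|+2$.
   Context: For a $(p,q)$-graph $G$ ($p$ vertices, $q$ edges), an edge-magic labeling is a bijection $f:V(G)\cup E(G)\to[1,p+q]$ such that $f(x)+f(xy)+f(y)$ equals a constant (the valence) for every edge $xy$. For a graph $H$, $\tau_H$ is the set of integers that are valences of edge-magic labelings of $H$. A decomposition $G\cong H_1\oplus H_2$ means $H_1,H_2$ are subgraphs of $G$ whose edge sets partition $E(G)$. Writing $X=\{x_i\}_{i=1}^s$, $Y=\{y_j\}_{j=1}^t$, $S_{2n}(G;H_1,H_2)$ is the graph with vertex set $X\cup Y\cup\bigcup_{k=1}^n X_k\cup\bigcup_{k=1}^n Y_k$, where $X_k=\{x_i^k\}_{i=1}^s$, $Y_k=\{y_j^k\}_{j=1}^t$ are new vertices, and edge set $E(G)\cup\{x_iy_j^k: x_iy_j\in E(H_1),\,k\in[1,n]\}\cup\{x_i^ky_j: x_iy_j\in E(H_2),\,k\in[1,n]\}$. *)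

From Stdlib Require Import ClassicalEpsilon.
From HB Require Import structures.
From mathcomp Require Import all_boot.
Set Implicit Arguments. Unset Strict Implicit. Unset Printing Implicit Defensive.

Definition asbool (P : Prop) : bool :=
  if excluded_middle_informative P then true else false.

Definition simple_graph (V : finType) (adj : rel V) : Prop :=
  symmetric adj /\ irreflexive adj.

Definition edges (V : finType) (adj : rel V) : {set {set V}} :=
  [set A : {set V} | [exists x, [exists y, adj x y && (A == [set x; y])]]].

Definition elt (V : finType) (adj : rel V) : Type :=
  (V + {A : {set V} | A \in edges adj})%type.

Definition edge_magic_labeling (V : finType) (adj : rel V)
    (f : elt adj -> nat) (k : nat) : Prop :=
  let p := #|V| in let q := #|edges adj| in
  [/\ injective f,
      (forall z, 1 <= f z <= p + q),
      (forall m, 1 <= m <= p + q -> exists z, f z = m) &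
      (forall (A : {set V}) (hA : A \in edges adj) (x y : V),
          adj x y -> A = [set x; y] ->
          f (inl x) + f (inr (exist _ A hA)) + f (inl y) = k)].

Definition edge_magic (V : finType) (adj : rel V) : Prop :=
  exists f k, @edge_magic_labeling V adj f k.

(* tau_G : the set of valences.  Every valence lies in [3, 3(p+q)], so it is
   represented as a finite set of 'I_(3(p+q)+1). *)
Definition tau (V : finType) (adj : rel V) : {set 'I_(3 * (#|V| + #|edges adj|)).+1} :=
  [set k | asbool (exists f, @edge_magic_labeling V adj f (nat_of_ord k))].

(* The graph S_{2n}(G;H1,H2).  Vertex set V + V * 'I_n, where inr (v,k)
   stands for the copy v^{k+1} (so X_k, Y_k are the copies of X, Y). *)
Definition S2n_adj (V : finType) (n : nat) (adj h1 h2 : rel V) (X Y : {set V})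
    : rel (V + V * 'I_n)%type :=
  fun a b =>
    match a, b with
    | inl u, inl v => adj u v
    | inl u, inr (v, _) =>
        ((u \in X) && (v \in Y) && h1 u v) || ((v \in X) && (u \in Y) && h2 v u)
    | inr (u, _), inl v =>
        ((v \in X) && (u \in Y) && h1 v u) || ((u \in X) && (v \in Y) && h2 u v)
    | inr _, inr _ => false
    end.

From mathcomp Require Import all_boot zify.
From Stdlib Require Import ClassicalEpsilon.

(* Every edge of S_2n(G; H1, H2) lies over an edge of G and has at most one end outside G, so it
   is determined by that edge of G together with the layer sum j in [0, n] of its ends; whether H1
   or H2 contains the edge of G fixes which end is the copy.  An edge-magic labeling of G with
   valence k thus lifts to S_2n by blowing every label L up to the block of the n + 1 labels
   (n+1)(L-1) + 1, ..., (n+1)L, indexed by the layers rotated by some a in [0, n]; this gives the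
   (n+1)|tau_G| distinct valences (n+1)(k-3) + 3 + n + a.  Lifting instead a labeling of minimal
   valence k0 so that the min(k0 - 3, p + q) smallest labels are spread over all the layers gives
   a valence below all of these, and its complementary labeling one above all of them. *)

Set Implicit Arguments. Unset Strict Implicit. Unset Printing Implicit Defensive.

Lemma asboolP (P : Prop) : asbool P <-> P.
Proof. by rewrite /asbool; case: excluded_middle_informative. Qed.

Lemma edivn_uniq (d q r q' r' : nat) : r < d -> r' < d ->
  d * q + r = d * q' + r' -> q = q' /\ r = r'.
Proof.
move=> ltrd ltr'd E; have := edivn_eq q ltrd; rewrite mulnC E mulnC edivn_eq //.
by case.
Qed.

Lemma inj_card_surj (T : finType) (F : T -> nat) (M : nat) :
  injective F -> (forall z, 0 < F z <= M) -> #|T| = M ->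
  forall t, 0 < t <= M -> exists z, F z = t.
Proof.
move=> Finj FR cardT t Ht.
have Fs : {subset map F (enum T) <= iota 1 M}.
  by move=> u /mapP [z _ ->]; rewrite mem_iota; have := FR z; lia.
have Fsize : size (iota 1 M) <= size (map F (enum T)).
  by rewrite size_map size_iota -cardE cardT.
have Fu : uniq (map F (enum T)) by rewrite map_inj_uniq ?enum_uniq.
have [_ Fs_eq] := uniq_min_size Fu Fs Fsize.
have : t \in iota 1 M by rewrite mem_iota; lia.
by rewrite -Fs_eq => /mapP [z _ ->]; exists z.
Qed.

Lemma set2_eq (T : finType) (a b c d : T) : a != b -> [set a; b] = [set c; d] ->
  (a = c /\ b = d) \/ (a = d /\ b = c).
Proof.
move=> nab E.
have ha : a \in [set c; d] by rewrite -E set21.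
have hb : b \in [set c; d] by rewrite -E set22.
move: ha hb; rewrite !inE => /orP [] /eqP ea /orP [] /eqP eb;
  by [left | right | move: nab; rewrite ea eb eqxx].
Qed.

Section EdgeMagic.

Variables (V : finType) (adj : rel V).

Definition nlabels := #|V| + #|edges adj|.

Definition edge_elt (A : {set V}) (hA : A \in edges adj) : elt adj :=
  inr (exist _ A hA).

Lemma edgesP (A : {set V}) :
  A \in edges adj -> exists x y, adj x y /\ A = [set x; y].
Proof.
by rewrite inE => /existsP [x /existsP [y /andP [h /eqP ->]]]; exists x, y.
Qed.

Lemma mem_edges x y : adj x y -> [set x; y] \in edges adj.
Proof.
by move=> h; rewrite inE; apply/existsP; exists x; apply/existsP; exists y; rewrite h eqxx.
Qed.

Lemma card_elt : #|{: V + {A : {set V} | A \in edges adj}}| = nlabels.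
Proof. by rewrite card_sum card_sig; congr addn; apply: eq_card. Qed.

Lemma labeling_dual (f : elt adj -> nat) k :
  edge_magic_labeling f k ->
  edge_magic_labeling (fun z => nlabels.+1 - f z) (3 * nlabels.+1 - k).
Proof.
rewrite /nlabels; case=> fI fR fS fV; split.
- by move=> z z'; cbv beta => E; apply: fI; have := fR z; have := fR z'; lia.
- by move=> z; cbv beta; have := fR z; lia.
- move=> t Ht; have [z Hz] := fS ((#|V| + #|edges adj|).+1 - t) ltac:(lia).
  by exists z; have := fR z; lia.
- move=> A hA x y hxy EA; have := fV A hA x y hxy EA.
  have := fR (inl x); have := fR (inl y); have := fR (inr (exist _ A hA)); lia.
Qed.

Hypothesis adj_irr : irreflexive adj.

Lemma labeling_edge_bounds (f : elt adj -> nat) k x y (hA : [set x; y] \in edges adj) :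
  edge_magic_labeling f k -> adj x y ->
  [/\ f (inl x) + 3 <= k, f (edge_elt hA) + 3 <= k, f (inl y) + 3 <= k & 6 <= k].
Proof.
case=> fI fR _ fV hxy.
have sum_k : f (inl x) + f (edge_elt hA) + f (inl y) = k := fV _ hA x y hxy erefl.
have nxy : x != y by apply: contraTneq hxy => ->; rewrite adj_irr.
have fxy : f (inl x) <> f (inl y) by move=> /fI [] /eqP; rewrite (negPf nxy).
have fxe : f (inl x) <> f (edge_elt hA) by move=> /fI.
have fye : f (inl y) <> f (edge_elt hA) by move=> /fI.
have := fR (inl x); have := fR (inl y); have := fR (edge_elt hA) => *; split; lia.
Qed.

Hypothesis edges_gt0 : 0 < #|edges adj|.

Lemma valence_bounds (f : elt adj -> nat) k :
  edge_magic_labeling f k -> 6 <= k <= 3 * nlabels.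
Proof.
move=> hf; move: edges_gt0; rewrite card_gt0 => /set0Pn [A hA].
have [x [y [hxy EA]]] := edgesP hA; subst A.
have [_ _ _ k_ge6] := labeling_edge_bounds hA hf hxy.
case: hf => _ fR _ fV.
have sum_k : f (inl x) + f (edge_elt hA) + f (inl y) = k := fV _ hA x y hxy erefl.
have := fR (inl x); have := fR (inl y); have := fR (edge_elt hA); rewrite /nlabels; lia.
Qed.

Definition valences : seq nat := [seq nat_of_ord k | k in tau adj].

Lemma size_valences : size valences = #|tau adj|.
Proof. exact: size_image. Qed.

Lemma uniq_valences : uniq valences.
Proof. by rewrite map_inj_uniq ?enum_uniq //; exact: val_inj. Qed.

Lemma valencesP (k : nat) : k \in valences <-> exists f : elt adj -> nat, edge_magic_labeling f k.
Proof.
split=> [/mapP [i] | [f hf]].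
  by rewrite mem_enum inE => /asboolP ? ->.
have /andP [_ hk] := valence_bounds hf.
have -> : k = nat_of_ord (inord k : 'I_(3 * nlabels).+1) by rewrite inordK // ltnS.
by apply: image_f; rewrite inE; apply/asboolP; exists f; rewrite inordK // ltnS.
Qed.

Lemma valences_dual (k : nat) :
  k \in valences -> 3 * nlabels.+1 - k \in valences.
Proof. by move/valencesP => [f /labeling_dual hf]; apply/valencesP; eexists; exact: hf. Qed.

Lemma min_valence : edge_magic adj ->
  exists2 k0, k0 \in valences & forall k, k \in valences -> k0 <= k.
Proof.
move=> [f [k hf]]; have hk : exists k, k \in valences by exists k; apply/valencesP; exists f.
by case: (ex_minnP hk) => k0 hk0 min_k0; exists k0.
Qed.

End EdgeMagic.

Section Copies.

Variables (V : finType) (n : nat).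
Implicit Types (v : V) (w : V + V * 'I_n).

Definition base w : V := match w with inl v => v | inr (v, _) => v end.
Definition layer w : nat := match w with inl _ => 0 | inr (_, i) => i.+1 end.
Definition copy v (j : nat) : V + V * 'I_n :=
  if j is j'.+1 then (if insub j' is Some i then inr (v, i) else inl v) else inl v.

Lemma layer_le w : layer w <= n.
Proof. by case: w => [//|[v i]] /=; rewrite ltn_ord. Qed.

Lemma base_copy v j : base (copy v j) = v.
Proof. by case: j => [//|j] /=; case: insubP. Qed.

Lemma layer_copy v j : j <= n -> layer (copy v j) = j.
Proof. by case: j => [//|j] /= hj; rewrite insubT. Qed.

Lemma copy_inr v j : 0 < j <= n -> exists i, copy v j = inr (v, i).
Proof. by case: j => [//|j] /= hj; rewrite insubT; eexists. Qed.

Lemma base_layer_inj w w' : base w = base w' -> layer w = layer w' -> w = w'.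
Proof.
have copyK w1 : copy (base w1) (layer w1) = w1 by case: w1 => [//|[v i]] /=; rewrite valK.
by move=> eb el; rewrite -(copyK w) -(copyK w') eb el.
Qed.

Lemma layer0 w : layer w = 0 -> w = inl (base w).
Proof. by case: w => [//|[v i]]. Qed.

Lemma layer_gt0 w : 0 < layer w -> exists i, w = inr (base w, i).
Proof. by case: w => [//|[v i]] _; exists i. Qed.

Definition edge_base (A : {set V + V * 'I_n}) : {set V} := [set base w | w in A].
Definition edge_layer (A : {set V + V * 'I_n}) : nat := \sum_(w in A) layer w.

Lemma edge_base2 w w' : edge_base [set w; w'] = [set base w; base w'].
Proof. by rewrite /edge_base imsetU1 imset_set1. Qed.

Lemma edge_layer2 w w' : w != w' -> edge_layer [set w; w'] = layer w + layer w'.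
Proof. by move=> nww'; rewrite /edge_layer big_setU1 ?inE //= big_set1. Qed.

End Copies.

(* Arithmetic data for lifting a labeling of G with valence k and N labels to S_2n(G; H1, H2):
   the copy in layer j of a vertex labelled L gets hv L j, and the edge of layer sum j over an
   edge labelled L gets he L j.  Edge labels of G are at most k - 3 (labeling_edge_bounds). *)
Record lift_scheme (N k n : nat) (hv he : nat -> nat -> nat) (K : nat) : Prop := {
  hv_range : forall L j, 0 < L <= N -> j <= n -> 0 < hv L j <= n.+1 * N;
  he_range : forall L j, 0 < L <= N -> L + 3 <= k -> j <= n -> 0 < he L j <= n.+1 * N;
  hv_inj : forall L j L' j', 0 < L <= N -> j <= n -> 0 < L' <= N -> j' <= n ->
    hv L j = hv L' j' -> L = L' /\ j = j';
  he_inj : forall L j L' j', 0 < L <= N -> L + 3 <= k -> j <= n ->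
    0 < L' <= N -> L' + 3 <= k -> j' <= n -> he L j = he L' j' -> L = L' /\ j = j';
  hv_he_eq : forall L j L' j', 0 < L <= N -> j <= n -> 0 < L' <= N -> L' + 3 <= k ->
    j' <= n -> hv L j = he L' j' -> L = L';
  lift_valence : forall L1 L2 L3 j1 j2, 0 < L1 <= N -> L1 + 3 <= k -> 0 < L2 <= N ->
    L2 + 3 <= k -> 0 < L3 <= N -> L3 + 3 <= k -> L1 + L2 + L3 = k -> j1 + j2 <= n ->
    (j1 = 0 \/ j2 = 0) -> hv L1 j1 + he L2 (j1 + j2) + hv L3 j2 = K }.

Definition rotate (n a j : nat) := (j + a) %% n.+1.

Lemma rotate_lt n a j : rotate n a j < n.+1.
Proof. exact: ltn_pmod. Qed.

Lemma rotate_inj n a j j' : j <= n -> j' <= n -> rotate n a j = rotate n a j' -> j = j'.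
Proof. by move=> hj hj' /eqP; rewrite /rotate eqn_modDr !modn_small ?ltnS // => /eqP. Qed.

(* Label L of G becomes the block [(n+1)(L-1) + 1, (n+1)L]; inside it the layers are rotated
   by a, and edges run through the block in the opposite direction. *)
Definition block_hv (n a L j : nat) := n.+1 * L.-1 + rotate n a j + 1.
Definition block_he (n a L j : nat) := n.+1 * L.-1 + (n - rotate n a j) + 1.
Definition block_valence (n k a : nat) := n.+1 * (k - 3) + 3 + n + a.

Lemma block_scheme N k n a : a <= n ->
  lift_scheme N k n (block_hv n a) (block_he n a) (block_valence n k a).
Proof.
move=> a_le_n; have rl := rotate_lt n a.
split.
- by move=> L j hL hj; rewrite /block_hv; have := rl j; nia.
- by move=> L j hL _ hj; rewrite /block_he; have := rl j; nia.
- move=> L j L' j' hL hj hL' hj'; rewrite /block_hv => E.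
  have E' : n.+1 * L.-1 + rotate n a j = n.+1 * L'.-1 + rotate n a j' by lia.
  have [eL eR] := edivn_uniq (rl j) (rl j') E'.
  by split; [lia | exact: rotate_inj eR].
- move=> L j L' j' hL _ hj hL' _ hj'; rewrite /block_he => E.
  have E' : n.+1 * L.-1 + (n - rotate n a j) = n.+1 * L'.-1 + (n - rotate n a j') by lia.
  have o : n - rotate n a j < n.+1 by lia.
  have o' : n - rotate n a j' < n.+1 by lia.
  have [eL eR] := edivn_uniq o o' E'.
  by split; [lia | apply: (rotate_inj (a := a) hj hj'); have := rl j; have := rl j'; lia].
- move=> L j L' j' hL hj hL' _ hj'; rewrite /block_hv /block_he => E.
  have E' : n.+1 * L.-1 + rotate n a j = n.+1 * L'.-1 + (n - rotate n a j') by lia.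
  have o' : n - rotate n a j' < n.+1 by lia.
  by have [eL _] := edivn_uniq (rl j) o' E'; lia.
- move=> L1 L2 L3 j1 j2 h1 _ h2 _ h3 _ hs hj hz; rewrite /block_hv /block_he /block_valence.
  have E : n.+1 * L1.-1 + n.+1 * L2.-1 + n.+1 * L3.-1 = n.+1 * (k - 3) by nia.
  have r0 : rotate n a 0 = a by rewrite /rotate modn_small.
  by case: hz => ->; rewrite ?addn0 ?add0n r0 in E *; [have := rl j2 | have := rl j1]; lia.
Qed.

(* The m = min(k - 3, N) smallest labels, which include all edge labels, are spread over the
   layers with step m; the remaining vertex labels fill the rest block by block. *)
Definition low_hv (m n L j : nat) :=
  if L <= m then L + m * j else m * n.+1 + n.+1 * (L - m - 1) + j + 1.
Definition low_he (m n L j : nat) := L + m * (n - j).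
Definition low_valence (N n k : nat) := k + minn (k - 3) N * n.

Lemma low_scheme N k n : 6 <= k -> 0 < N ->
  lift_scheme N k n (low_hv (minn (k - 3) N) n) (low_he (minn (k - 3) N) n)
    (low_valence N n k).
Proof.
rewrite /low_valence => hk hN; set m := minn (k - 3) N.
have m0 : 0 < m by rewrite /m; lia.
have mL L : L <= N -> L + 3 <= k -> L <= m by rewrite /m; lia.
have mN : m <= N by rewrite /m; lia.
clearbody m.
have lowb L j : 0 < L <= m -> j <= n -> L + m * j <= m * n.+1 by nia.
have highb L j : m < L -> m * n.+1 < m * n.+1 + n.+1 * (L - m - 1) + j + 1 by nia.
split.
- move=> L j hL hj; rewrite /low_hv; case: ifP => hLm; last nia.
  by have := lowb L j ltac:(lia) hj; nia.
- by move=> L j hL hLk hj; rewrite /low_he; have := mL L ltac:(lia) hLk; nia.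
- move=> L j L' j' hL hj hL' hj'; rewrite /low_hv.
  case: ifP => h1; case: ifP => h2 E.
  + have E' : m * j + L.-1 = m * j' + L'.-1 by lia.
    have o : L.-1 < m by lia.
    have o' : L'.-1 < m by lia.
    by have [e1 e2] := edivn_uniq o o' E'; split; lia.
  + by have := lowb L j ltac:(lia) hj; have := highb L' j' ltac:(lia); lia.
  + by have := lowb L' j' ltac:(lia) hj'; have := highb L j ltac:(lia); lia.
  + have E' : n.+1 * (L - m - 1) + j = n.+1 * (L' - m - 1) + j' by lia.
    by have [e1 e2] := edivn_uniq (hj : j < n.+1) (hj' : j' < n.+1) E'; split; lia.
- move=> L j L' j' hL hLk hj hL' hLk' hj'; rewrite /low_he => E.
  have := mL L ltac:(lia) hLk; have := mL L' ltac:(lia) hLk' => m1 m2.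
  have E' : m * (n - j) + L.-1 = m * (n - j') + L'.-1 by lia.
  have o : L.-1 < m by lia.
  have o' : L'.-1 < m by lia.
  by have [e1 e2] := edivn_uniq o o' E'; split; lia.
- move=> L j L' j' hL hj hL' hLk' hj'; rewrite /low_hv /low_he.
  have m2 := mL L' ltac:(lia) hLk'.
  have hb : L' + m * (n - j') <= m * n.+1 by apply: lowb; lia.
  case: ifP => h1 E; last by have := highb L j ltac:(lia); lia.
  have E' : m * j + L.-1 = m * (n - j') + L'.-1 by lia.
  have o : L.-1 < m by lia.
  have o' : L'.-1 < m by lia.
  by have [e1 e2] := edivn_uniq o o' E'; lia.
- move=> L1 L2 L3 j1 j2 h1 k1 h2 k2 h3 k3 hs hj hz; rewrite /low_hv /low_he.
  rewrite (mL L1 ltac:(lia) k1) (mL L3 ltac:(lia) k3).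
  have : m * j1 + m * (n - (j1 + j2)) + m * j2 = m * n by nia.
  lia.
Qed.

Definition lifted_valences (N n k0 : nat) (s : seq nat) : seq nat :=
  low_valence N n k0 :: 3 * (n.+1 * N).+1 - low_valence N n k0
    :: [seq block_valence n k a | k <- s, a <- iota 0 n.+1].

Section S2nGraph.

Variables (V : finType) (n : nat) (adj h1 h2 : rel V) (X Y : {set V}).
Hypotheses (adj_sym : symmetric adj) (adj_irr : irreflexive adj).
Hypothesis XY_disjoint : [disjoint X & Y].
Hypothesis adj_bip : forall x y, adj x y -> (x \in X) && (y \in Y) || (x \in Y) && (y \in X).
Hypotheses (h1_sym : symmetric h1) (h2_sym : symmetric h2).
Hypothesis adj_dec : forall x y, adj x y = h1 x y || h2 x y.
Hypothesis h12_disj : forall x y, ~~ (h1 x y && h2 x y).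

Local Notation adjS := (@S2n_adj V n adj h1 h2 X Y).

Lemma adjS_sym : symmetric adjS.
Proof. by move=> [u|[u i]] [v|[v j]] //=; rewrite adj_sym. Qed.

Lemma adjS_base a b : adjS a b -> adj (base a) (base b).
Proof.
case: a => [u|[u i]]; case: b => [v|[v j]] //=.
- by case/orP => /andP [_ h]; [rewrite adj_dec h | rewrite adj_sym adj_dec h orbT].
- by case/orP => /andP [_ h]; [rewrite adj_sym adj_dec h | rewrite adj_dec h orbT].
Qed.

Lemma adjS_base_neq a b : adjS a b -> base a != base b.
Proof. by move/adjS_base; apply: contraTneq => ->; rewrite adj_irr. Qed.

Lemma adjS_neq a b : adjS a b -> a != b.
Proof. by move/adjS_base_neq; apply: contraNneq => ->. Qed.

Lemma adjS_layer0 a b : adjS a b -> layer a = 0 \/ layer b = 0.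
Proof. by case: a => [u|[u i]]; case: b => [v|[v j]] //= _; [left|left|right]. Qed.

(* Whether H1 or H2 contains the edge uv decides which of u, v is the one that gets copied. *)
Lemma adjS_copied_side u v i i' :
  adjS (inl u) (inr (v, i)) -> ~ adjS (inr (u, i')) (inl v).
Proof.
have notXY z : z \in X -> z \in Y -> False.
  by move=> hX hY; move: (disjointFr XY_disjoint hX); rewrite hY.
rewrite /=; case/orP => /andP [/andP [a1 a2] a3]; case/orP => /andP [/andP [b1 b2] b3].
- exact: (notXY u).
- by move: (h12_disj u v); rewrite a3 b3.
- by move: (h12_disj v u); rewrite a3 b3.
- exact: (notXY v).
Qed.

Lemma adjS_eq a b a' b' : adjS a b -> adjS a' b' ->
  base a = base a' -> base b = base b' -> layer a + layer b = layer a' + layer b' ->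
  a = a' /\ b = b'.
Proof.
move=> hab hab' ea eb es.
case: (adjS_layer0 hab) => la; case: (adjS_layer0 hab') => la'.
- by split; apply: base_layer_inj => //; lia.
- case: (posnP (layer b)) => lb; first by split; apply: base_layer_inj => //; lia.
  have [i Hb] := layer_gt0 lb; have [i' Ha'] := @layer_gt0 _ _ a' ltac:(lia).
  move: hab hab'; rewrite (layer0 la) (layer0 la') Hb Ha' -ea -eb => h h'.
  by case: (adjS_copied_side h h').
- case: (posnP (layer a)) => la2; first by split; apply: base_layer_inj => //; lia.
  have [i Ha] := layer_gt0 la2; have [i' Hb'] := @layer_gt0 _ _ b' ltac:(lia).
  move: hab hab'; rewrite (layer0 la) (layer0 la') Ha Hb' -ea -eb => h h'.
  by case: (adjS_copied_side h' h).
- by split; apply: base_layer_inj => //; lia.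
Qed.

Lemma edgesS_inj A A' : A \in edges adjS -> A' \in edges adjS ->
  edge_base A = edge_base A' -> edge_layer A = edge_layer A' -> A = A'.
Proof.
move=> /edgesP [a [b [hab ->]]] /edgesP [a' [b' [hab' ->]]].
rewrite !edge_base2 !edge_layer2 ?adjS_neq // => eB eL.
case: (set2_eq (adjS_base_neq hab) eB) => [[ea eb] | [ea eb]].
  by have [-> ->] := adjS_eq hab hab' ea eb eL.
have hb'a' : adjS b' a' by rewrite adjS_sym.
by have [-> ->] := adjS_eq hab hb'a' ea eb ltac:(lia); rewrite setUC.
Qed.

Lemma adjS_lift x y j : adj x y -> j <= n ->
  exists a b, [/\ adjS a b, base a = x, base b = y & layer a + layer b = j].
Proof.
move=> hxy hj; case: (posnP j) => [->|jp]; first by exists (inl x), (inl y).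
have [iy Ey] := copy_inr (n := n) y (j := j) ltac:(lia).
have [ix Ex] := copy_inr (n := n) x (j := j) ltac:(lia).
have := adj_dec x y; rewrite hxy => /esym h12.
case/orP: (adj_bip hxy) => /andP [hx hy]; case/orP: h12 => hh.
- exists (inl x), (copy n y j); rewrite base_copy layer_copy // Ey /= hx hy hh.
  by split.
- exists (copy n x j), (inl y); rewrite base_copy layer_copy // Ex /= hx hy hh orbT.
  by split; rewrite ?addn0.
- exists (copy n x j), (inl y); rewrite base_copy layer_copy // Ex /= hx hy h1_sym hh.
  by split; rewrite ?addn0.
- exists (inl x), (copy n y j); rewrite base_copy layer_copy // Ey /= hx hy h2_sym hh orbT.
  by split.
Qed.

Lemma edge_base_edgesS A : A \in edges adjS -> edge_base A \in edges adj.
Proof. by move=> /edgesP [a [b [hab ->]]]; rewrite edge_base2 mem_edges ?adjS_base. Qed.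

Lemma edge_layer_le A : A \in edges adjS -> edge_layer A <= n.
Proof.
move=> /edgesP [a [b [hab ->]]]; rewrite edge_layer2 ?adjS_neq //.
by case: (adjS_layer0 hab) => ->; rewrite ?addn0 layer_le.
Qed.

Lemma card_edgesS : #|edges adjS| = n.+1 * #|edges adj|.
Proof.
pose code (A : {set V + V * 'I_n}) : {set V} * 'I_n.+1 := (edge_base A, inord (edge_layer A)).
have code_inj : {in edges adjS &, injective code}.
  move=> A A' hA hA' [eB /(congr1 val)]; rewrite /= !inordK ?ltnS ?edge_layer_le //.
  exact: edgesS_inj.
have code_im : code @: edges adjS = setX (edges adj) [set: 'I_n.+1].
  apply/setP => -[B j]; rewrite in_setX in_setT andbT; apply/imsetP/idP.
    by move=> [A /edge_base_edgesS hB [-> _]].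
  move=> /edgesP [x [y [hxy ->]]].
  have [a [b [hab <- <- eL]]] := adjS_lift hxy (ltn_ord j : j <= n).
  exists [set a; b]; first exact: mem_edges.
  by rewrite /code edge_base2 edge_layer2 ?adjS_neq // eL inord_val.
by rewrite -(card_in_imset code_inj) code_im cardsX cardsT card_ord mulnC.
Qed.

Lemma nlabelsS : nlabels adjS = n.+1 * nlabels adj.
Proof. by rewrite /nlabels card_edgesS card_sum card_prod card_ord mulnDr; lia. Qed.

Section Lift.

Variables (f : elt adj -> nat) (k : nat) (hv he : nat -> nat -> nat) (K : nat).

Definition edge_label (B : {set V}) : nat := if insub B is Some e then f (inr e) else 0.

Definition lift_labeling (z : elt adjS) : nat :=
  match z with
  | inl w => hv (f (inl (base w))) (layer w)
  | inr e => he (edge_label (edge_base (val e))) (edge_layer (val e))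
  end.

Hypothesis f_lab : edge_magic_labeling f k.
Hypothesis scheme : lift_scheme (nlabels adj) k n hv he K.

Lemma edge_labelE B (hB : B \in edges adj) : edge_label B = f (edge_elt hB).
Proof. by rewrite /edge_label insubT. Qed.

Lemma edge_label_inj : {in edges adj &, injective edge_label}.
Proof.
by move=> B B' hB hB'; rewrite (edge_labelE hB) (edge_labelE hB'); case: f_lab => fI _ _ _ /fI [].
Qed.

Lemma edge_label_vertex B v : B \in edges adj -> edge_label B <> f (inl v).
Proof. by move=> hB; rewrite (edge_labelE hB); case: f_lab => fI _ _ _ /fI. Qed.

Lemma edge_label_bounds A : A \in edges adjS ->
  0 < edge_label (edge_base A) <= nlabels adj /\ edge_label (edge_base A) + 3 <= k.
Proof.
move=> /edge_base_edgesS hB; rewrite (edge_labelE hB).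
have [x [y [hxy EB]]] := edgesP hB; move: hB; rewrite EB => hB.
have [_ hfe _ _] := labeling_edge_bounds adj_irr hB f_lab hxy.
by case: f_lab => _ fR _ _; split; [exact: fR | exact: hfe].
Qed.

Lemma lift_labeling_inj : injective lift_labeling.
Proof.
case: scheme => _ _ vI eI veI _; case: f_lab => fI fR _ _.
move=> [w|[A hA]] [w'|[A' hA']] /= E.
- have [/fI [eb] el] := vI _ _ _ _ (fR _) (layer_le w) (fR _) (layer_le w') E.
  by rewrite (base_layer_inj eb el).
- have [r r3] := edge_label_bounds hA'.
  have := veI _ _ _ _ (fR _) (layer_le w) r r3 (edge_layer_le hA') E.
  by move/esym/(edge_label_vertex (edge_base_edgesS hA')).
- have [r r3] := edge_label_bounds hA.
  have := veI _ _ _ _ (fR _) (layer_le w') r r3 (edge_layer_le hA) (esym E).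
  by move/esym/(edge_label_vertex (edge_base_edgesS hA)).
- have [r r3] := edge_label_bounds hA; have [r' r3'] := edge_label_bounds hA'.
  have [eL eJ] := eI _ _ _ _ r r3 (edge_layer_le hA) r' r3' (edge_layer_le hA') E.
  have eB := edge_label_inj (edge_base_edgesS hA) (edge_base_edgesS hA') eL.
  by congr inr; apply: val_inj; exact: edgesS_inj hA hA' eB eJ.
Qed.

Lemma lift_labeling_range z : 0 < lift_labeling z <= n.+1 * nlabels adj.
Proof.
case: f_lab scheme => _ fR _ _ [vR eR _ _ _ _].
case: z => [w|[A hA]] /=; first exact: vR (fR _) (layer_le w).
have [r r3] := edge_label_bounds hA.
exact: eR r r3 (edge_layer_le hA).
Qed.

Lemma lift_labeling_valence A (hA : A \in edges adjS) x y : adjS x y -> A = [set x; y] ->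
  lift_labeling (inl x) + lift_labeling (edge_elt hA) + lift_labeling (inl y) = K.
Proof.
move=> hxy EA; have hG := adjS_base hxy; have hB := mem_edges hG.
case: f_lab scheme => _ fR _ fV [_ _ _ _ _ val_K].
have [fx_le fe_le fy_le _] := labeling_edge_bounds adj_irr hB f_lab hG.
rewrite /= EA edge_base2 edge_layer2 ?adjS_neq // (edge_labelE hB).
apply: val_K => //; [exact: fV | | exact: adjS_layer0 hxy].
by have := layer_le x; have := layer_le y; case: (adjS_layer0 hxy) => ->; lia.
Qed.

Lemma lift_labelingP : edge_magic_labeling lift_labeling K.
Proof.
have range z : 0 < lift_labeling z <= nlabels adjS.
  by rewrite nlabelsS; apply: lift_labeling_range.
split; [exact: lift_labeling_inj | exact: range | | exact: lift_labeling_valence].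
exact: inj_card_surj lift_labeling_inj range (card_elt adjS).
Qed.

End Lift.

Lemma adjS_irr : irreflexive adjS.
Proof. by move=> a; apply/negP => /adjS_neq; rewrite eqxx. Qed.

Hypothesis edges_gt0 : 0 < #|edges adj|.

Lemma edgesS_gt0 : 0 < #|edges adjS|.
Proof. by rewrite card_edgesS muln_gt0. Qed.

Lemma lifted_valences_sub (k0 : nat) : k0 \in valences adj ->
  {subset lifted_valences (nlabels adj) n k0 (valences adj) <= valences adjS}.
Proof.
have memS k : (exists g : elt adjS -> nat, edge_magic_labeling g k) -> k \in valences adjS.
  by move/(valencesP adjS_irr edgesS_gt0).
move=> /(valencesP adj_irr edges_gt0) [f0 hf0] v; rewrite !inE.
have low_mem : low_valence (nlabels adj) n k0 \in valences adjS.
  have /andP [k0_ge6 _] := valence_bounds adj_irr edges_gt0 hf0.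
  have N_gt0 : 0 < nlabels adj by rewrite /nlabels addn_gt0 edges_gt0 orbT.
  by apply: memS; eexists; exact: (lift_labelingP hf0 (low_scheme n k0_ge6 N_gt0)).
case/or3P => [/eqP -> // | /eqP -> | /allpairsP [[k a] [hk ha ->]]].
  by rewrite -nlabelsS; exact: (valences_dual adjS_irr edgesS_gt0 low_mem).
move: hk ha => /(valencesP adj_irr edges_gt0) [f hf]; rewrite mem_iota add0n ltnS => /andP [_ ha].
by apply: memS; eexists; exact: (lift_labelingP hf (block_scheme _ _ ha)).
Qed.

End S2nGraph.

Lemma block_valence_inj n k a k' a' : 3 <= k -> 3 <= k' -> a <= n -> a' <= n ->
  block_valence n k a = block_valence n k' a' -> k = k' /\ a = a'.
Proof.
rewrite /block_valence => hk hk' ha ha' E.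
have E' : n.+1 * (k - 3) + a = n.+1 * (k' - 3) + a' by lia.
by have [] := edivn_uniq (ha : a < n.+1) (ha' : a' < n.+1) E'; split; lia.
Qed.

Lemma low_valence_lt_block N n k0 k a : 0 < n -> 3 <= k0 <= k ->
  low_valence N n k0 < block_valence n k a.
Proof.
rewrite /low_valence /block_valence => n_gt0 hk.
have : minn (k0 - 3) N * n <= (k - 3) * n.
  by rewrite leq_mul2r; apply/orP; right; rewrite geq_min; lia.
nia.
Qed.

Lemma block_valence_dual N n k a : 3 <= k <= 3 * N -> a <= n ->
  block_valence n k a + block_valence n (3 * N.+1 - k) (n - a) = 3 * (n.+1 * N).+1.
Proof. rewrite /block_valence => hk ha; nia. Qed.

Section LiftedValences.

Variables (N n k0 : nat) (s : seq nat).
Hypotheses (n_gt0 : 0 < n) (s_uniq : uniq s).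
Hypothesis s_bounds : forall k : nat, k \in s -> 6 <= k <= 3 * N.
Hypotheses (k0_mem : k0 \in s) (k0_min : forall k : nat, k \in s -> k0 <= k).
Hypothesis s_dual : forall k : nat, k \in s -> 3 * N.+1 - k \in s.

Lemma block_valence_between (k a : nat) : k \in s -> a <= n ->
  low_valence N n k0 < block_valence n k a < 3 * (n.+1 * N).+1 - low_valence N n k0.
Proof.
have low_lt k' a' : k' \in s -> low_valence N n k0 < block_valence n k' a'.
  by move=> hk'; apply: low_valence_lt_block => //; have := s_bounds k0_mem; have := k0_min hk'; lia.
move=> hk ha; rewrite low_lt //=.
have k_bounds : 3 <= k <= 3 * N by have := s_bounds hk; lia.
have := low_lt _ (n - a) (s_dual hk); have := block_valence_dual k_bounds ha; lia.
Qed.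

Lemma lifted_valences_uniq : uniq (lifted_valences N n k0 s).
Proof.
set blocks := [seq block_valence n k a | k <- s, a <- iota 0 n.+1].
set low := low_valence N n k0; set high := 3 * (n.+1 * N).+1 - low.
have blocks_uniq : uniq blocks.
  apply: allpairs_uniq => //; first exact: iota_uniq.
  move=> _ _ /allpairsP [[k a] [hk ha ->]] /allpairsP [[k' a'] [hk' ha' ->]] /=.
  move: hk hk' ha ha'; rewrite !mem_iota /= !ltnS => hk hk' ha ha'.
  have [k3 k'3] : 3 <= k /\ 3 <= k' by have := s_bounds hk; have := s_bounds hk'; lia.
  by case/(block_valence_inj k3 k'3 ha ha') => -> ->.
have between v : v \in blocks -> low < v < high.
  case/allpairsP => [[k a] [hk ha ->]]; move: ha; rewrite mem_iota /= ltnS => ha.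
  exact: block_valence_between.
have low_out : low \notin blocks by apply/negP => /between; lia.
have high_out : high \notin blocks by apply/negP => /between; lia.
have low_high : low != high.
  by have := block_valence_between (a := 0) k0_mem (leq0n n); rewrite neq_ltn; lia.
by rewrite /lifted_valences !cons_uniq in_cons negb_or low_high low_out high_out.
Qed.

End LiftedValences.

Lemma size_lifted_valences N n k0 s : size (lifted_valences N n k0 s) = (size s * n.+1).+2.
Proof. by rewrite -[n.+1](size_iota 0) -(size_allpairs (block_valence n)). Qed.

Theorem mainTheorem11 (V : finType) (adj : rel V) (X Y : {set V})
    (h1 h2 : rel V) (n : nat) :
  simple_graph adj ->
  0 < #|edges adj| ->
  edge_magic adj ->
  (* bipartite with stable sets X and Y *)
  [disjoint X & Y] -> X :|: Y = [set: V] ->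
  (forall x y, adj x y -> (x \in X) && (y \in Y) || (x \in Y) && (y \in X)) ->
  (* G ≅ H1 ⊕ H2 : the edge sets of H1, H2 partition E(G) *)
  symmetric h1 -> symmetric h2 ->
  (forall x y, adj x y = h1 x y || h2 x y) ->
  (forall x y, ~~ (h1 x y && h2 x y)) ->
  1 <= n ->
  (n.+1 * #|tau adj| + 2 <= #|tau (@S2n_adj V n adj h1 h2 X Y)|)%N.
Proof.
move=> [adj_sym adj_irr] edges_gt0 magic XY_disj _ adj_bip h1_sym h2_sym adj_dec h12_disj n_gt0.
have [k0 k0_mem k0_min] := min_valence adj_irr edges_gt0 magic.
have bounds k : k \in valences adj -> 6 <= k <= 3 * nlabels adj.
  by move=> /(valencesP adj_irr edges_gt0) [f]; apply: valence_bounds.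
have lifted_uniq := lifted_valences_uniq n_gt0 (uniq_valences adj) bounds k0_mem k0_min
  (valences_dual adj_irr edges_gt0).
have lifted_sub := lifted_valences_sub (n := n) adj_sym adj_irr XY_disj adj_bip h1_sym h2_sym adj_dec
  h12_disj edges_gt0 k0_mem.
have := uniq_leq_size lifted_uniq lifted_sub.
by rewrite size_lifted_valences !size_valences mulnC addn2.
Qed.
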